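(* Let $(H,R)$ be a semiquasitriangular Hopf algebra with Drinfeld element $u=S(R^{(2)})R^{(1)}$, let $\mu:H\otimes H\to H$ be the multiplication, $T=\mu\circ\nu:H\to H$, and $\widetilde\nu:=(S\otimes S)\circ\nu\circ S^{-1}:H\to H\otimes H$. The following are equivalent: (1) $S(u)u\in\operatorname{Z}(H)$; (2) $S\circ T=T\circ S$; (3) $\mu\circ\nu=\mu\circ\widetilde\nu$.
   Context: All vector spaces are over a field $k$, $\otimes=\otimes_k$. For a Hopf algebra $H$ with comultiplication $\Delta$, counit $\epsilon$, antipode $S$, we use Sweedler notation $\Delta(h)=h_1\otimes h_2$, etc. $\operatorname{Z}(H)$ is the centre of $H$. For $R\in H\otimes H$ we write $R=R^{(1)}\otimes R^{(2)}$ (summation understood); $R'^{(1)}\otimes R'^{(2)}$ denotes another copy of $R$. Definition (semiquasitriangular Hopf algebra): a pair $(H,R)$ with $H$ a Hopf algebra with bijective antipode and $R\in H\otimes H$ invertible such that (1) $R^{(1)}_1\otimes R^{(1)}_2\otimes R^{(2)} = R^{(1)}\otimes R'^{(1)}\otimes R^{(2)}R'^{(2)}$; (2) $R^{(1)}\otimes R^{(2)}_1\otimes R^{(2)}_2 = R^{(1)}R'^{(1)}\otimes R'^{(2)}\otimes R^{(2)}$; (3) $R^{(1)}\otimes R^{(2)}_2R'^{(1)}\otimes R^{(2)}_1R'^{(2)} = R^{(1)}\otimes R'^{(1)}R^{(2)}_1\otimes R'^{(2)}R^{(2)}_2$; (4) $R^{(1)}_2R'^{(1)}\otimes R^{(1)}_1R'^{(2)}\otimes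 R^{(2)} = R'^{(1)}R^{(1)}_1\otimes R'^{(2)}R^{(1)}_2\otimes R^{(2)}$; (5) $\nu(h):=R^{(2)}h_2R'^{(2)}\otimes S(h_1)S(R^{(1)})h_3R'^{(1)}\in H\otimes\operatorname{Z}(H)$ for all $h\in H$; (6) $\nu(h)=R^{(1)}h_2R'^{(1)}\otimes S(R'^{(2)})S(h_1)R^{(2)}h_3$ for all $h\in H$. The map $\nu$ in the claim is the one defined in (5); thus $T(h)=R^{(2)}h_2R'^{(2)}S(h_1)S(R^{(1)})h_3R'^{(1)}$. *)

From HB Require Import structures.
From mathcomp Require Import all_boot all_algebra.

Set Implicit Arguments.
Unset Strict Implicit.
Unset Printing Implicit Defensive.

Import GRing.Theory.
Local Open Scope ring_scope.

(* Tensors in H (x) H (resp. H (x) H (x) H) are represented by finite formal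
   sums, i.e. sequences of pairs (triples) of elements of H.  Two such
   representatives denote the same tensor iff every bilinear (trilinear) map
   into every k-vector space takes the same value on them (universal property
   of the tensor product). *)

Section Hopf.
Variables (k : fieldType) (H : algType k).

Definition bilinear_map (W : lmodType k) (b : H -> H -> W) : Prop :=
  (forall (a : k) (x x' y : H), b (a *: x + x') y = a *: b x y + b x' y) /\
  (forall (a : k) (x y y' : H), b x (a *: y + y') = a *: b x y + b x y').

Definition trilinear_map (W : lmodType k) (b : H -> H -> H -> W) : Prop :=
  (forall (a : k) (x x' y z : H), b (a *: x + x') y z = a *: b x y z + b x' y z) /\
  (forall (a : k) (x y y' z : H), b x (a *: y + y') z = a *: b x y z + b x y' z) /\
  (forall (a : k) (x y z z' : H), b x y (a *: z + z') = a *: b x y z + b x y z').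

Definition teq2 (s t : seq (H * H)) : Prop :=
  forall (W : lmodType k) (b : H -> H -> W), bilinear_map b ->
    \sum_(p <- s) b p.1 p.2 = \sum_(p <- t) b p.1 p.2.

Definition teq3 (s t : seq (H * H * H)) : Prop :=
  forall (W : lmodType k) (b : H -> H -> H -> W), trilinear_map b ->
    \sum_(p <- s) b p.1.1 p.1.2 p.2 = \sum_(p <- t) b p.1.1 p.1.2 p.2.

Definition tmul2 (s t : seq (H * H)) : seq (H * H) :=
  [seq (p.1 * q.1, p.2 * q.2) | p <- s, q <- t].

Definition central (z : H) : Prop := forall x : H, x * z = z * x.

Definition in_centre (z : H) : Prop := central z.

Variables (Delta : H -> seq (H * H)) (eps : H -> k) (S : H -> H).

(* (Delta (x) id) o Delta : h |-> h_1 (x) h_2 (x) h_3 *)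
Definition Delta3 (h : H) : seq (H * H * H) :=
  [seq (c.1, c.2, d.2) | d <- Delta h, c <- Delta d.1].

Definition is_hopf : Prop :=
  (forall (a : k) (x y : H),
      teq2 (Delta (a *: x + y)) ([seq (a *: p.1, p.2) | p <- Delta x] ++ Delta y)) /\
  (forall h : H, teq3 (Delta3 h) [seq (d.1, c.1, c.2) | d <- Delta h, c <- Delta d.2]) /\
  (forall (a : k) (x y : H), eps (a *: x + y) = a * eps x + eps y) /\
  (forall h : H, \sum_(p <- Delta h) eps p.1 *: p.2 = h) /\
  (forall h : H, \sum_(p <- Delta h) eps p.2 *: p.1 = h) /\
  (forall x y : H, teq2 (Delta (x * y)) (tmul2 (Delta x) (Delta y))) /\
  teq2 (Delta 1) [:: (1, 1)] /\
  (forall x y : H, eps (x * y) = eps x * eps y) /\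
  eps 1 = 1 /\
  (forall (a : k) (x y : H), S (a *: x + y) = a *: S x + S y) /\
  (forall h : H, \sum_(p <- Delta h) S p.1 * p.2 = eps h *: 1) /\
  (forall h : H, \sum_(p <- Delta h) p.1 * S p.2 = eps h *: 1).

Variable (Rm : seq (H * H)).

(* nu(h) = R^(2) h_2 R'^(2) (x) S(h_1) S(R^(1)) h_3 R'^(1) *)
Definition nu (h : H) : seq (H * H) :=
  flatten [seq [seq (r.2 * x.1.2 * s.2, S x.1.1 * S r.1 * x.2 * s.1)
               | x <- Delta3 h, s <- Rm] | r <- Rm].

(* R^(1) h_2 R'^(1) (x) S(R'^(2)) S(h_1) R^(2) h_3 *)
Definition nu' (h : H) : seq (H * H) :=
  flatten [seq [seq (r.1 * x.1.2 * s.1, S s.2 * S x.1.1 * r.2 * x.2)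
               | x <- Delta3 h, s <- Rm] | r <- Rm].

Definition is_semiquasitriangular : Prop :=
  (exists Ri : seq (H * H),
      teq2 (tmul2 Rm Ri) [:: (1, 1)] /\ teq2 (tmul2 Ri Rm) [:: (1, 1)]) /\
  teq3 [seq (c.1, c.2, r.2) | r <- Rm, c <- Delta r.1]
       [seq (r.1, s.1, r.2 * s.2) | r <- Rm, s <- Rm] /\
  teq3 [seq (r.1, c.1, c.2) | r <- Rm, c <- Delta r.2]
       [seq (r.1 * s.1, s.2, r.2) | r <- Rm, s <- Rm] /\
  teq3 (flatten [seq [seq (r.1, c.2 * s.1, c.1 * s.2) | c <- Delta r.2, s <- Rm]
                | r <- Rm])
       (flatten [seq [seq (r.1, s.1 * c.1, s.2 * c.2) | c <- Delta r.2, s <- Rm]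
                | r <- Rm]) /\
  teq3 (flatten [seq [seq (c.2 * s.1, c.1 * s.2, r.2) | c <- Delta r.1, s <- Rm]
                | r <- Rm])
       (flatten [seq [seq (s.1 * c.1, s.2 * c.2, r.2) | c <- Delta r.1, s <- Rm]
                | r <- Rm]) /\
  (* (5) nu(h) lies in H (x) Z(H) *)
  (forall h : H, exists t : seq (H * H),
      teq2 (nu h) t /\ (forall p, p \in t -> in_centre p.2)) /\
  (forall h : H, teq2 (nu h) (nu' h)).

Definition drinfeld : H := \sum_(r <- Rm) S r.2 * r.1.

Definition mu (t : seq (H * H)) : H := \sum_(p <- t) p.1 * p.2.

Definition Tmap (h : H) : H := mu (nu h).

Definition nu_tilde (Sinv : H -> H) (h : H) : seq (H * H) :=
  [seq (S p.1, S p.2) | p <- nu (Sinv h)].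

End Hopf.

(* Let [G x := mu ((S (x) id) (nu x))] ([nuS] below).  Since the second leg of
   [nu x] is central, [T y = y_1 G(y_2) y_3], and [G x * u = u * S^-1 x], where the
   Drinfeld element [u] has the right inverse [R^(2) S^2(R^(1))].  The map
   [F |-> (y |-> S(y_3) F(y_2) S(y_1))] is injective on linear maps, so
   [S o T = T o S] iff [G o S = S o G]; conjugating by [u] and [S u] turns the
   latter into the centrality of [S(u) u].  Finally [mu o nu~ = S o T o S^-1],
   which makes (2) and (3) equivalent. *)

From HB Require Import structures.
From mathcomp Require Import all_boot all_algebra.
Import GRing.Theory.
Local Open Scope ring_scope.

Set Implicit Arguments.
Unset Strict Implicit.
Unset Printing Implicit Defensive.

Section Multilinear.
Variables (k : fieldType) (H : algType k).
Implicit Types (W : lmodType k) (x y : H).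

Lemma lin0 W (f : H -> W) : linear f -> f 0 = 0.
Proof.
move=> hf; have := hf 1 0 0; rewrite !scale1r addr0 => h.
by apply: (addrI (f 0)); rewrite addr0 -h.
Qed.

Lemma linD W (f : H -> W) : linear f -> forall x y, f (x + y) = f x + f y.
Proof. by move=> hf x y; have := hf 1 x y; rewrite !scale1r. Qed.

Lemma linZ W (f : H -> W) : linear f -> forall a x, f (a *: x) = a *: f x.
Proof. by move=> hf a x; rewrite -[a *: x]addr0 hf lin0 // addr0. Qed.

Lemma lin_sum W (f : H -> W) I (s : seq I) (F : I -> H) : linear f ->
  f (\sum_(i <- s) F i) = \sum_(i <- s) f (F i).
Proof.
move=> hf; elim: s => [|i s IH]; first by rewrite !big_nil lin0.
by rewrite !big_cons linD // IH.
Qed.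

Lemma linear_id : linear (fun x : H => x).
Proof. by []. Qed.

Lemma linear_mull (f : H -> H) (a : H) : linear f -> linear (fun x => a * f x).
Proof. by move=> hf c x y; rewrite hf mulrDr scalerAr. Qed.

Lemma linear_mulr (f : H -> H) (b : H) : linear f -> linear (fun x => f x * b).
Proof. by move=> hf c x y; rewrite hf mulrDl scalerAl. Qed.

Lemma linear_comp W (f : H -> H) (g : H -> W) :
  linear f -> linear g -> linear (fun x => g (f x)).
Proof. by move=> hf hg c x y; rewrite hf hg. Qed.

Lemma linear_add W (f g : H -> W) :
  linear f -> linear g -> linear (fun x => f x + g x).
Proof. by move=> hf hg c x y; rewrite hf hg scalerDr addrACA. Qed.

Lemma linear_big W I (s : seq I) (F : I -> H -> W) :
  (forall i, linear (F i)) -> linear (fun x => \sum_(i <- s) F i x).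
Proof.
move=> hF c x y; elim: s => [|i s IH]; first by rewrite !big_nil scaler0 addr0.
by rewrite !big_cons IH hF scalerDr addrACA.
Qed.

Lemma linear_scale_fun W (f : H -> k) (v : W) :
  (forall a x y, f (a *: x + y) = a * f x + f y) -> linear (fun x => f x *: v).
Proof. by move=> hf c x y; rewrite hf scalerDl scalerA. Qed.

Lemma linear_scale W (f : H -> W) (c : k) : linear f -> linear (fun x => c *: f x).
Proof. by move=> hf a x y; rewrite hf scalerDr !scalerA mulrC. Qed.

Lemma bilinear_map_lin W (b : H -> H -> W) :
  (forall y, linear (b^~ y)) -> (forall x, linear (b x)) -> bilinear_map b.
Proof. by move=> h1 h2; split=> a x x' y; [apply: h1 | apply: h2]. Qed.

Lemma trilinear_map_lin W (b : H -> H -> H -> W) :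
  (forall y z, linear (fun x => b x y z)) -> (forall x z, linear (fun y => b x y z)) ->
  (forall x y, linear (b x y)) -> trilinear_map b.
Proof.
by move=> h1 h2 h3; split; [|split]=> a x y y' z; [apply: h1|apply: h2|apply: h3].
Qed.

Lemma bilinear_linl W (b : H -> H -> W) (f : H -> H) y :
  bilinear_map b -> linear f -> linear (fun x => b (f x) y).
Proof. by case=> h1 _ hf a x x'; rewrite hf h1. Qed.

Lemma bilinear_linr W (b : H -> H -> W) (f : H -> H) x :
  bilinear_map b -> linear f -> linear (fun y => b x (f y)).
Proof. by case=> _ h2 hf a y y'; rewrite hf h2. Qed.

Lemma bilinear_pair_linl W (G : H * H -> W) (f : H -> H) y :
  bilinear_map (fun a b => G (a, b)) -> linear f -> linear (fun x => G (f x, y)).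
Proof. exact: bilinear_linl. Qed.

Lemma bilinear_pair_linr W (G : H * H -> W) (f : H -> H) x :
  bilinear_map (fun a b => G (a, b)) -> linear f -> linear (fun y => G (x, f y)).
Proof. exact: bilinear_linr. Qed.

Lemma bilinZl W (b : H -> H -> W) c x y : bilinear_map b -> b (c *: x) y = c *: b x y.
Proof. by move=> hb; rewrite (linZ (bilinear_linl y hb linear_id)). Qed.

Lemma bilinZr W (b : H -> H -> W) c x y : bilinear_map b -> b x (c *: y) = c *: b x y.
Proof. by move=> hb; rewrite (linZ (bilinear_linr x hb linear_id)). Qed.

Lemma bilin_suml W (b : H -> H -> W) I (s : seq I) F y : bilinear_map b ->
  b (\sum_(i <- s) F i) y = \sum_(i <- s) b (F i) y.
Proof. by move=> hb; rewrite (lin_sum _ _ (bilinear_linl y hb linear_id)). Qed.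

Lemma bilin_sumr W (b : H -> H -> W) I (s : seq I) F x : bilinear_map b ->
  b x (\sum_(i <- s) F i) = \sum_(i <- s) b x (F i).
Proof. by move=> hb; rewrite (lin_sum _ _ (bilinear_linr x hb linear_id)). Qed.

Lemma teq2_sum W s t (G : H * H -> W) : teq2 s t ->
  bilinear_map (fun a b => G (a, b)) -> \sum_(p <- s) G p = \sum_(p <- t) G p.
Proof.
move=> e hb; have /= h := e W _ hb.
transitivity (\sum_(p <- s) G (p.1, p.2)); first by apply: eq_bigr => -[].
by rewrite h; apply: eq_bigr => -[].
Qed.

Lemma sum_tmul2 W s t (G : H * H -> W) :
  \sum_(p <- tmul2 s t) G p = \sum_(a <- s) \sum_(b <- t) G (a.1 * b.1, a.2 * b.2).
Proof. exact: big_allpairs_dep. Qed.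

Lemma mulr_sumlr I (r : seq I) (a b : H) (F : I -> H) :
  a * (\sum_(i <- r) F i) * b = \sum_(i <- r) a * F i * b.
Proof. by rewrite mulr_sumr mulr_suml. Qed.

End Multilinear.

Section HopfAxioms.
Variables (k : fieldType) (H : algType k).
Implicit Types (W : lmodType k) (x y h : H).
Variables (Delta : H -> seq (H * H)) (eps : H -> k) (S : H -> H).
Hypothesis hH : is_hopf Delta eps S.

Lemma Delta_linear a x y :
  teq2 (Delta (a *: x + y)) ([seq (a *: p.1, p.2) | p <- Delta x] ++ Delta y).
Proof. by have [h _] := hH; apply: h. Qed.

Lemma coassoc_teq h :
  teq3 (Delta3 Delta h) [seq (d.1, c.1, c.2) | d <- Delta h, c <- Delta d.2].
Proof. by have [_ [h' _]] := hH; apply: h'. Qed.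

Lemma eps_linear a x y : eps (a *: x + y) = a * eps x + eps y.
Proof. by have [_ [_ [h _]]] := hH; apply: h. Qed.

Lemma counitl_id h : \sum_(p <- Delta h) eps p.1 *: p.2 = h.
Proof. by have [_ [_ [_ [h' _]]]] := hH; apply: h'. Qed.

Lemma counitr_id h : \sum_(p <- Delta h) eps p.2 *: p.1 = h.
Proof. by have [_ [_ [_ [_ [h' _]]]]] := hH; apply: h'. Qed.

Lemma DeltaM x y : teq2 (Delta (x * y)) (tmul2 (Delta x) (Delta y)).
Proof. by have [_ [_ [_ [_ [_ [h _]]]]]] := hH; apply: h. Qed.

Lemma Delta1 : teq2 (Delta 1) [:: (1, 1)].
Proof. by have [_ [_ [_ [_ [_ [_ [h _]]]]]]] := hH. Qed.

Lemma epsM x y : eps (x * y) = eps x * eps y.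
Proof. by have [_ [_ [_ [_ [_ [_ [_ [h _]]]]]]]] := hH; apply: h. Qed.

Lemma eps1 : eps 1 = 1.
Proof. by have [_ [_ [_ [_ [_ [_ [_ [_ [h _]]]]]]]]] := hH. Qed.

Lemma linear_antipode : linear S.
Proof. by have [_ [_ [_ [_ [_ [_ [_ [_ [_ [h _]]]]]]]]]] := hH. Qed.

Lemma antipodel_id h : \sum_(p <- Delta h) S p.1 * p.2 = eps h *: 1.
Proof. by have [_ [_ [_ [_ [_ [_ [_ [_ [_ [_ [h' _]]]]]]]]]]] := hH; apply: h'. Qed.

Lemma antipoder_id h : \sum_(p <- Delta h) p.1 * S p.2 = eps h *: 1.
Proof. by have [_ [_ [_ [_ [_ [_ [_ [_ [_ [_ [_ h']]]]]]]]]]] := hH; apply: h'. Qed.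

Lemma linear_eps_scale W (v : W) (f : H -> H) :
  linear f -> linear (fun x => eps (f x) *: v).
Proof.
move=> hf; apply: (linear_comp (g := fun y => eps y *: v) hf).
by apply: linear_scale_fun => a x y; rewrite eps_linear.
Qed.

Lemma linear_Delta_sum W (G : H * H -> W) (f : H -> H) :
  linear f -> bilinear_map (fun a b => G (a, b)) ->
  linear (fun x => \sum_(p <- Delta (f x)) G p).
Proof.
move=> hf hb; apply: (linear_comp (g := fun x => \sum_(p <- Delta x) G p) hf) => a x y.
rewrite (teq2_sum (Delta_linear a x y) hb) big_cat /= big_map.
congr (_ + _); rewrite scaler_sumr; apply: eq_bigr => -[p1 p2] _ /=.
by have /= -> := bilinZl a p1 p2 hb.
Qed.

Lemma linear_antipode_comp (f : H -> H) : linear f -> linear (fun x => S (f x)).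
Proof. by move=> hf; apply: linear_comp hf linear_antipode. Qed.

End HopfAxioms.

Ltac linearity_step :=
  first [ assumption
        | exact: linear_id
        | apply: linear_big => ?
        | apply: linear_add
        | apply: linear_mulr
        | apply: linear_mull
        | apply: linear_scale
        | match goal with hH : is_hopf _ _ _ |- _ =>
            first [ apply: (linear_antipode_comp hH)
                  | apply: (linear_eps_scale hH)
                  | (apply: (linear_Delta_sum hH); [ | apply: bilinear_map_lin => ?]) ] end
        | match goal with hb : bilinear_map _ |- _ =>
            first [ apply: (bilinear_pair_linl _ hb) | apply: (bilinear_pair_linr _ hb)
                  | apply: (bilinear_linl _ hb) | apply: (bilinear_linr _ hb) ] end
        | match goal with hl : linear ?g |- linear (fun _ => ?g _) =>
            apply: (linear_comp _ hl) end
        | apply: bilinear_map_lin => ?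
        | apply: trilinear_map_lin => ? ? ].
Ltac linearity := repeat (linearity_step || (progress rewrite /=)).

Section HopfSums.
Variables (k : fieldType) (H : algType k).
Implicit Types (W : lmodType k) (x y h : H).
Variables (Delta : H -> seq (H * H)) (eps : H -> k) (S : H -> H).
Hypothesis hH : is_hopf Delta eps S.

Lemma coassoc W (G : H -> H -> H -> W) h : trilinear_map G ->
  \sum_(p <- Delta h) \sum_(c <- Delta p.1) G c.1 c.2 p.2 =
  \sum_(p <- Delta h) \sum_(c <- Delta p.2) G p.1 c.1 c.2.
Proof. by move=> hG; have := coassoc_teq hH h hG; rewrite !big_allpairs_dep. Qed.

Lemma counitl W (f : H -> W) h : linear f -> \sum_(p <- Delta h) eps p.1 *: f p.2 = f h.
Proof.
move=> hf; rewrite -{2}(counitl_id hH h) (lin_sum _ _ hf).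
by apply: eq_bigr => p _; rewrite (linZ hf).
Qed.

Lemma counitr W (f : H -> W) h : linear f -> \sum_(p <- Delta h) eps p.2 *: f p.1 = f h.
Proof.
move=> hf; rewrite -{2}(counitr_id hH h) (lin_sum _ _ hf).
by apply: eq_bigr => p _; rewrite (linZ hf).
Qed.

Lemma antipodel W (f : H -> W) h :
  linear f -> \sum_(p <- Delta h) f (S p.1 * p.2) = eps h *: f 1.
Proof. by move=> hf; rewrite -(lin_sum _ _ hf) (antipodel_id hH) (linZ hf). Qed.

Lemma antipoder W (f : H -> W) h :
  linear f -> \sum_(p <- Delta h) f (p.1 * S p.2) = eps h *: f 1.
Proof. by move=> hf; rewrite -(lin_sum _ _ hf) (antipoder_id hH) (linZ hf). Qed.

Lemma antipodel_mid (a b : H) h :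
  \sum_(d <- Delta h) a * S d.1 * d.2 * b = eps h *: (a * b).
Proof.
transitivity (a * (\sum_(d <- Delta h) S d.1 * d.2) * b).
  by rewrite mulr_sumlr; apply: eq_bigr => d _; rewrite !mulrA.
by rewrite (antipodel_id hH) -scalerAr -scalerAl mulr1.
Qed.

Lemma antipoder_mid (a b : H) h :
  \sum_(d <- Delta h) a * d.1 * S d.2 * b = eps h *: (a * b).
Proof.
transitivity (a * (\sum_(d <- Delta h) d.1 * S d.2) * b).
  by rewrite mulr_sumlr; apply: eq_bigr => d _; rewrite !mulrA.
by rewrite (antipoder_id hH) -scalerAr -scalerAl mulr1.
Qed.

Lemma antipoder_coassoc W (b : H -> H -> W) y : bilinear_map b ->
  \sum_(d <- Delta y) \sum_(c <- Delta d.2) b (d.1 * S c.1) c.2 = b 1 y.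
Proof.
move=> hb; rewrite -(coassoc (G := fun P Q Z => b (P * S Q) Z)); last by linearity.
rewrite -[RHS](counitl (f := b 1) y); last by linearity.
apply: eq_bigr => d _.
by rewrite (antipoder (f := fun z => b z d.2)) //; linearity.
Qed.

End HopfSums.

Section Antipode.
Variables (k : fieldType) (H : algType k).
Implicit Types (W : lmodType k) (x y h : H).
Variables (Delta : H -> seq (H * H)) (eps : H -> k) (S : H -> H).
Hypothesis hH : is_hopf Delta eps S.

(* Both sides are convolution inverses of the multiplication [H (x) H -> H]. *)
Lemma antipodeM x y : S (x * y) = S y * S x.
Proof.
transitivity (\sum_(p <- Delta x) \sum_(q <- Delta y) \sum_(c <- Delta p.1)
   \sum_(d <- Delta q.1) S (c.1 * d.1) * (c.2 * d.2) * (S q.2 * S p.2)); last first.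
  rewrite -(counitl hH (f := fun z => S y * S z) x); last by linearity.
  apply: eq_bigr => p _.
  rewrite -(counitl hH (f := fun z => S z * S p.2) y); last by linearity.
  rewrite scaler_sumr; apply: eq_bigr => q _.
  rewrite scalerA -(epsM hH) -[in RHS](mul1r (S q.2 * S p.2)) scalerAl.
  rewrite -(antipodel_id hH) mulr_suml (teq2_sum (DeltaM hH _ _)); last by linearity.
  by rewrite sum_tmul2.
symmetry.
transitivity (\sum_(p <- Delta x) \sum_(c <- Delta p.1) \sum_(q <- Delta y)
   \sum_(d <- Delta q.2) S (c.1 * q.1) * c.2 * d.1 * S d.2 * S p.2).
  apply: eq_bigr => p _; rewrite exchange_big; apply: eq_bigr => c _.
  rewrite (coassoc hH (G := fun a b c' => S (c.1 * a) * (c.2 * b) * (S c' * S p.2)));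
    last by linearity.
  by apply: eq_bigr => q _; apply: eq_bigr => d _; rewrite !mulrA.
under eq_bigr => p _ do under eq_bigr => c _ do under eq_bigr => q _ do
  rewrite (antipoder_mid hH).
transitivity (\sum_(p <- Delta x) \sum_(c <- Delta p.1) S (c.1 * y) * c.2 * S p.2).
  apply: eq_bigr => p _; apply: eq_bigr => c _.
  by rewrite (counitr hH (f := fun z => S (c.1 * z) * c.2 * S p.2)) //; linearity.
rewrite (coassoc hH (G := fun a b c' => S (a * y) * b * S c')); last by linearity.
transitivity (\sum_(p <- Delta x) eps p.2 *: S (p.1 * y)).
  apply: eq_bigr => p _; rewrite -[in RHS](mulr1 (S (p.1 * y))) -(antipoder_mid hH).
  by apply: eq_bigr => c _; rewrite mulr1.
by rewrite (counitr hH (f := fun z => S (z * y))) //; linearity.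
Qed.

Lemma antipode1 : S 1 = 1.
Proof.
transitivity (\sum_(p <- [:: (1, 1)]) S p.1 * p.2); first by rewrite big_seq1 /= mulr1.
rewrite -(teq2_sum (Delta1 hH) (G := fun p => S p.1 * p.2)); last by linearity.
by rewrite (antipodel_id hH) (eps1 hH) scale1r.
Qed.

Lemma Delta_antipode_conv W (G : H -> H -> W) x : bilinear_map G ->
  \sum_(b <- Delta x) \sum_(t <- Delta (S b.1)) \sum_(e <- Delta b.2)
     G (t.1 * e.1) (t.2 * e.2) = eps x *: G 1 1.
Proof.
move=> hG.
transitivity (\sum_(b <- Delta x) (fun z => \sum_(t <- Delta z) G t.1 t.2) (S b.1 * b.2)).
  apply: eq_bigr => b _ /=.
  by rewrite (teq2_sum (DeltaM hH _ _) (G := fun t => G t.1 t.2)) ?sum_tmul2.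
rewrite (antipodel hH (f := fun z => \sum_(t <- Delta z) G t.1 t.2)); last by linearity.
by rewrite (teq2_sum (Delta1 hH) (G := fun t => G t.1 t.2)) ?big_seq1.
Qed.

Lemma Delta_conv_antipode_op W (G : H -> H -> W) x : bilinear_map G ->
  \sum_(p <- Delta x) \sum_(e <- Delta p.1) \sum_(f <- Delta p.2)
     G (e.1 * S f.2) (e.2 * S f.1) = eps x *: G 1 1.
Proof.
move=> hG.
under eq_bigr => p _ do rewrite exchange_big.
rewrite -(coassoc hH (G := fun a b c => \sum_(e <- Delta a) G (e.1 * S c) (e.2 * S b)));
  last by linearity.
transitivity (\sum_(p <- Delta x) \sum_(c <- Delta p.1) \sum_(e <- Delta c.2)
   G (c.1 * S p.2) (e.1 * S e.2)).
  apply: eq_bigr => p _.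
  by rewrite (coassoc hH (G := fun a b c => G (a * S p.2) (b * S c))) //; linearity.
transitivity (\sum_(p <- Delta x) \sum_(c <- Delta p.1) eps c.2 *: G (c.1 * S p.2) 1).
  apply: eq_bigr => p _; apply: eq_bigr => c _.
  by rewrite (antipoder hH (f := G (c.1 * S p.2))) //; linearity.
transitivity (\sum_(p <- Delta x) G (p.1 * S p.2) 1).
  apply: eq_bigr => p _.
  by rewrite (counitr hH (f := fun z => G (z * S p.2) 1)) //; linearity.
by rewrite (antipoder hH (f := fun z => G z 1)) //; linearity.
Qed.

(* [Delta \o S] and [(S (x) S) \o Delta^op] are both convolution inverses of [Delta]. *)
Lemma Delta_antipode W (G : H * H -> W) x : bilinear_map (fun a b => G (a, b)) ->
  \sum_(q <- Delta (S x)) G q = \sum_(p <- Delta x) G (S p.2, S p.1).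
Proof.
move=> hG; symmetry.
rewrite -(counitl hH (f := fun z => \sum_(p <- Delta z) G (S p.2, S p.1)) x);
  last by linearity.
transitivity (\sum_(a <- Delta x) \sum_(b <- Delta a.1) \sum_(t <- Delta (S b.1))
   \sum_(e <- Delta b.2) \sum_(p <- Delta a.2) G (t.1 * e.1 * S p.2, t.2 * e.2 * S p.1)).
  apply: eq_bigr => a _.
  transitivity (eps a.1 *: \sum_(p <- Delta a.2) G (1 * S p.2, 1 * S p.1)).
    by congr (_ *: _); apply: eq_bigr => p _; rewrite !mul1r.
  by rewrite -(Delta_antipode_conv
    (G := fun u v => \sum_(p <- Delta a.2) G (u * S p.2, v * S p.1))) //; linearity.
rewrite (coassoc hH (G := fun u v w => \sum_(t <- Delta (S u)) \sum_(e <- Delta v)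
   \sum_(p <- Delta w) G (t.1 * e.1 * S p.2, t.2 * e.2 * S p.1))) /=; last by linearity.
transitivity (\sum_(a <- Delta x) \sum_(t <- Delta (S a.1)) eps a.2 *: G t).
  apply: eq_bigr => a _; rewrite exchange_big; apply: eq_bigr => t _.
  transitivity (eps a.2 *: G (t.1 * 1, t.2 * 1)); last by rewrite !mulr1; case: t.
  rewrite -(Delta_conv_antipode_op (G := fun u v => G (t.1 * u, t.2 * v))); last by linearity.
  by apply: eq_bigr => b _; apply: eq_bigr => e _; apply: eq_bigr => p _; rewrite !mulrA.
rewrite -[RHS](counitr hH (f := fun z => \sum_(t <- Delta (S z)) G t) x);
  last by linearity.
by apply: eq_bigr => a _; rewrite scaler_sumr.
Qed.

Definition antipode_sandwich (F : H -> H) y :=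
  \sum_(d <- Delta y) \sum_(c <- Delta d.2) S c.2 * F c.1 * S d.1.

Lemma antipode_sandwichK (F : H -> H) x : linear F ->
  \sum_(a <- Delta x) \sum_(b <- Delta a.2)
    S (S b.2) * antipode_sandwich F b.1 * S (S a.1) = F x.
Proof.
move=> lF.
transitivity (\sum_(a <- Delta x) \sum_(b <- Delta a.2) \sum_(d <- Delta b.1)
   \sum_(c <- Delta d.2) S (S b.2) * S c.2 * F c.1 * S d.1 * S (S a.1)).
  apply: eq_bigr => a _; apply: eq_bigr => b _.
  rewrite /antipode_sandwich mulr_sumlr; apply: eq_bigr => d _.
  by rewrite mulr_sumlr; apply: eq_bigr => c _; rewrite !mulrA.
transitivity (\sum_(a <- Delta x) \sum_(b <- Delta a.2) \sum_(d <- Delta b.2)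
   \sum_(c <- Delta d.1) S (S d.2) * S c.2 * F c.1 * S b.1 * S (S a.1)).
  apply: eq_bigr => a _.
  by rewrite (coassoc hH (G := fun P Q Z => \sum_(c <- Delta Q)
     S (S Z) * S c.2 * F c.1 * S P * S (S a.1))) //; linearity.
transitivity (\sum_(a <- Delta x) \sum_(b <- Delta a.2) \sum_(d <- Delta b.2)
   \sum_(c <- Delta d.2) S (S c.2) * S c.1 * F d.1 * S b.1 * S (S a.1)).
  apply: eq_bigr => a _; apply: eq_bigr => b _.
  by rewrite (coassoc hH (G := fun P Q Z =>
     S (S Z) * S Q * F P * S b.1 * S (S a.1))) //; linearity.
transitivity (\sum_(a <- Delta x) \sum_(b <- Delta a.2) F b.2 * S b.1 * S (S a.1)).
  apply: eq_bigr => a _; apply: eq_bigr => b _.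
  rewrite -[RHS](counitr hH (f := fun z => F z * S b.1 * S (S a.1))); last by linearity.
  apply: eq_bigr => d _.
  transitivity (\sum_(c <- Delta d.2) (fun z => S z * F d.1 * S b.1 * S (S a.1))
    (c.1 * S c.2)).
    by apply: eq_bigr => c _; rewrite antipodeM.
  by rewrite (antipoder hH (f := fun z => S z * F d.1 * S b.1 * S (S a.1)))
    /= ?antipode1 ?mul1r //; linearity.
rewrite -(coassoc hH (G := fun A B C => F C * S B * S (S A))) /=; last by linearity.
rewrite -[RHS](counitl hH (f := F) x) //; apply: eq_bigr => a _.
transitivity (\sum_(b <- Delta a.1) (fun z => F a.2 * S z) (S b.1 * b.2)).
  by apply: eq_bigr => b _; rewrite /= antipodeM mulrA.
by rewrite (antipodel hH (f := fun z => F a.2 * S z)) /= ?antipode1 ?mulr1 //; linearity.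
Qed.

Lemma antipode_sandwich_inj (F1 F2 : H -> H) : linear F1 -> linear F2 ->
  antipode_sandwich F1 =1 antipode_sandwich F2 -> F1 =1 F2.
Proof.
move=> lF1 lF2 e x; rewrite -(antipode_sandwichK x lF1) -(antipode_sandwichK x lF2).
by apply: eq_bigr => a _; apply: eq_bigr => b _; rewrite e.
Qed.

End Antipode.

Section Semiquasitriangular.
Variables (k : fieldType) (H : algType k).
Implicit Types (W : lmodType k) (x y h : H).
Variables (Delta : H -> seq (H * H)) (eps : H -> k) (S Sinv : H -> H).
Variable Rm : seq (H * H).
Hypothesis hH : is_hopf Delta eps S.
Hypotheses (SK : cancel S Sinv) (SinvK : cancel Sinv S).
Hypothesis hR : is_semiquasitriangular Delta S Rm.

Let lS := linear_antipode hH.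

Lemma linear_Sinv : linear Sinv.
Proof. by move=> a x y; apply: (can_inj SK); rewrite lS !SinvK. Qed.
Let lSinv := linear_Sinv.

Lemma SinvM x y : Sinv (x * y) = Sinv y * Sinv x.
Proof. by apply: (can_inj SK); rewrite (antipodeM hH) !SinvK. Qed.

Lemma Sinv1 : Sinv 1 = 1.
Proof. by apply: (can_inj SK); rewrite SinvK (antipode1 hH). Qed.

Lemma antipoder_Sinv h : \sum_(c <- Delta h) c.2 * Sinv c.1 = eps h *: 1.
Proof.
rewrite -Sinv1 -(linZ lSinv) -(antipoder_id hH) (lin_sum _ _ lSinv).
by apply: eq_bigr => c _; rewrite SinvM SK.
Qed.

Lemma R_invertible : exists Ri : seq (H * H),
  teq2 (tmul2 Rm Ri) [:: (1, 1)] /\ teq2 (tmul2 Ri Rm) [:: (1, 1)].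
Proof. by have [h _] := hR. Qed.

Lemma R_Delta1 W (G : H -> H -> H -> W) : trilinear_map G ->
  \sum_(r <- Rm) \sum_(c <- Delta r.1) G c.1 c.2 r.2 =
  \sum_(r <- Rm) \sum_(s <- Rm) G r.1 s.1 (r.2 * s.2).
Proof.
by move=> hG; have [_ [h _]] := hR; have := h _ _ hG; rewrite !big_allpairs_dep.
Qed.

Lemma R_Delta2 W (G : H -> H -> H -> W) : trilinear_map G ->
  \sum_(r <- Rm) \sum_(c <- Delta r.2) G r.1 c.1 c.2 =
  \sum_(r <- Rm) \sum_(s <- Rm) G (r.1 * s.1) s.2 r.2.
Proof.
by move=> hG; have [_ [_ [h _]]] := hR; have := h _ _ hG; rewrite !big_allpairs_dep.
Qed.

Lemma R_Delta2_op W (G : H -> H -> H -> W) : trilinear_map G ->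
  \sum_(r <- Rm) \sum_(c <- Delta r.2) \sum_(s <- Rm) G r.1 (c.2 * s.1) (c.1 * s.2) =
  \sum_(r <- Rm) \sum_(c <- Delta r.2) \sum_(s <- Rm) G r.1 (s.1 * c.1) (s.2 * c.2).
Proof.
move=> hG; have [_ [_ [_ [h _]]]] := hR.
have := h _ _ hG; rewrite !big_flatten /= !big_map.
by under eq_bigr => r _ do rewrite big_allpairs_dep;
   under [in RHS]eq_bigr => r _ do rewrite big_allpairs_dep.
Qed.

Lemma nu_central h : exists t : seq (H * H),
  teq2 (nu Delta S Rm h) t /\ (forall p, p \in t -> in_centre p.2).
Proof. by have [_ [_ [_ [_ [_ [h' _]]]]]] := hR. Qed.

Lemma nu_nu' h : teq2 (nu Delta S Rm h) (nu' Delta S Rm h).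
Proof. by have [_ [_ [_ [_ [_ [_ h']]]]]] := hR. Qed.

(* By (1), [R = (1 (x) x) R] for [x = (eps (x) id) R]; now cancel the invertible [R]. *)
Lemma eps_R1 : \sum_(r <- Rm) eps r.1 *: r.2 = 1.
Proof.
set x := \sum_(r <- Rm) eps r.1 *: r.2.
have xR W (b : H -> H -> W) : bilinear_map b ->
    \sum_(r <- Rm) b r.1 r.2 = \sum_(s <- Rm) b s.1 (x * s.2).
  move=> hb.
  transitivity (\sum_(r <- Rm) \sum_(c <- Delta r.1) b (eps c.1 *: c.2) r.2).
    apply: eq_bigr => r _.
    rewrite -(counitl hH (f := fun z => b z r.2) r.1); last by linearity.
    by apply: eq_bigr => c _; rewrite bilinZl.
  rewrite (R_Delta1 (G := fun p q Z => b (eps p *: q) Z)); last by linearity.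
  rewrite exchange_big; apply: eq_bigr => s _.
  rewrite /x mulr_suml bilin_sumr //; apply: eq_bigr => r _.
  by rewrite bilinZl // -scalerAl bilinZr.
have [Ri [RRi _]] := R_invertible.
have RRi1 W (b : H -> H -> W) : bilinear_map b ->
    \sum_(r <- Rm) \sum_(q <- Ri) b (r.1 * q.1) (r.2 * q.2) = b 1 1.
  move=> hb; rewrite -(sum_tmul2 _ _ (fun p => b p.1 p.2)).
  by rewrite (teq2_sum RRi (G := fun p => b p.1 p.2)) ?big_seq1.
pose b0 := fun p q : H => eps p *: q.
have hb0 : bilinear_map b0 by rewrite /b0; linearity.
have := RRi1 _ _ hb0.
rewrite (xR _ (fun P Z => \sum_(q <- Ri) b0 (P * q.1) (Z * q.2))); last by linearity.
under eq_bigr => s _ do under eq_bigr => q _ do rewrite -mulrA.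
rewrite (RRi1 _ (fun P Z => b0 P (x * Z))); last by linearity.
by rewrite /b0 (eps1 hH) !scale1r mulr1 => ->.
Qed.

Lemma eps_R2 : \sum_(r <- Rm) eps r.2 *: r.1 = 1.
Proof.
set y := \sum_(r <- Rm) eps r.2 *: r.1.
have Ry W (b : H -> H -> W) : bilinear_map b ->
    \sum_(r <- Rm) b r.1 r.2 = \sum_(r <- Rm) b (r.1 * y) r.2.
  move=> hb.
  transitivity (\sum_(r <- Rm) \sum_(c <- Delta r.2) b r.1 (eps c.1 *: c.2)).
    apply: eq_bigr => r _.
    rewrite -(counitl hH (f := fun z => b r.1 z) r.2); last by linearity.
    by apply: eq_bigr => c _; rewrite bilinZr.
  rewrite (R_Delta2 (G := fun p q Z => b p (eps q *: Z))); last by linearity.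
  apply: eq_bigr => r _.
  rewrite /y mulr_sumr bilin_suml //; apply: eq_bigr => s _.
  by rewrite bilinZr // -scalerAr bilinZl.
have [Ri [_ RiR]] := R_invertible.
have RiR1 W (b : H -> H -> W) : bilinear_map b ->
    \sum_(q <- Ri) \sum_(r <- Rm) b (q.1 * r.1) (q.2 * r.2) = b 1 1.
  move=> hb; rewrite -(sum_tmul2 _ _ (fun p => b p.1 p.2)).
  by rewrite (teq2_sum RiR (G := fun p => b p.1 p.2)) ?big_seq1.
pose b0 := fun p q : H => eps q *: p.
have hb0 : bilinear_map b0 by rewrite /b0; linearity.
have := RiR1 _ _ hb0.
rewrite exchange_big (Ry _ (fun P Z => \sum_(q <- Ri) b0 (q.1 * P) (q.2 * Z)));
  last by linearity.
under eq_bigr => s _ do under eq_bigr => q _ do rewrite mulrA.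
rewrite exchange_big (RiR1 _ (fun P Z => b0 (P * y) Z)); last by linearity.
by rewrite /b0 (eps1 hH) !scale1r mul1r => ->.
Qed.

Lemma R_mul_antipode1 W (b : H -> H -> W) : bilinear_map b ->
  \sum_(r <- Rm) \sum_(s <- Rm) b (r.1 * S s.1) (r.2 * s.2) = b 1 1.
Proof.
move=> hb; rewrite -(R_Delta1 (G := fun p q Z => b (p * S q) Z)); last by linearity.
transitivity (\sum_(r <- Rm) eps r.1 *: b 1 r.2).
  by apply: eq_bigr => r _; rewrite (antipoder hH (f := fun z => b z r.2)) //; linearity.
by rewrite -[X in b 1 X]eps_R1 bilin_sumr //; apply: eq_bigr => r _; rewrite bilinZr.
Qed.

Lemma Sinv2_R_mul_R W (b : H -> H -> W) : bilinear_map b ->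
  \sum_(r <- Rm) \sum_(s <- Rm) b (r.1 * s.1) (Sinv r.2 * s.2) = b 1 1.
Proof.
move=> hb; rewrite -(R_Delta2 (G := fun P q Z => b P (Sinv Z * q))); last by linearity.
transitivity (\sum_(r <- Rm) eps r.2 *: b r.1 1).
  apply: eq_bigr => r _.
  transitivity (\sum_(c <- Delta r.2) (fun z => b r.1 (Sinv z)) (S c.1 * c.2)).
    by apply: eq_bigr => c _; rewrite SinvM SK.
  by rewrite (antipodel hH (f := fun z => b r.1 (Sinv z))) ?Sinv1 //; linearity.
by rewrite -[X in b X 1]eps_R2 bilin_suml //; apply: eq_bigr => r _; rewrite bilinZl.
Qed.

(* [(id (x) Sinv) R] is a left and [(S (x) id) R] a right inverse of [R]. *)
Lemma Sinv2_R_eq_S1_R W (b : H -> H -> W) : bilinear_map b ->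
  \sum_(t <- Rm) b t.1 (Sinv t.2) = \sum_(s <- Rm) b (S s.1) s.2.
Proof.
move=> hb.
transitivity (\sum_(t <- Rm) b (t.1 * 1) (Sinv t.2 * 1)).
  by apply: eq_bigr => t _; rewrite !mulr1.
rewrite -(R_mul_antipode1 (b := fun P Z => \sum_(t <- Rm) b (t.1 * P) (Sinv t.2 * Z)));
  last by linearity.
transitivity (\sum_(t <- Rm) \sum_(r <- Rm) \sum_(s <- Rm)
   b (t.1 * r.1 * S s.1) (Sinv t.2 * r.2 * s.2)).
  under eq_bigr => r _ do rewrite exchange_big.
  rewrite exchange_big; apply: eq_bigr => t _; apply: eq_bigr => r _.
  by apply: eq_bigr => s _; rewrite !mulrA.
rewrite (Sinv2_R_mul_R (b := fun P Z => \sum_(s <- Rm) b (P * S s.1) (Z * s.2)));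
  last by linearity.
by apply: eq_bigr => s _; rewrite !mul1r.
Qed.

Lemma antipode_R W (b : H -> H -> W) : bilinear_map b ->
  \sum_(r <- Rm) b (S r.1) (S r.2) = \sum_(r <- Rm) b r.1 r.2.
Proof.
move=> hb; rewrite -(Sinv2_R_eq_S1_R (b := fun p q => b p (S q))) /=; last by linearity.
by apply: eq_bigr => t _; rewrite SinvK.
Qed.

Local Notation u := (drinfeld S Rm).

Lemma R_conj_drinfeld : \sum_(r <- Rm) r.2 * u * r.1 = 1.
Proof.
transitivity (\sum_(r <- Rm) \sum_(s <- Rm) r.2 * S s.2 * Sinv (S s.1) * r.1).
  apply: eq_bigr => r _; rewrite /drinfeld mulr_sumlr.
  by apply: eq_bigr => s _; rewrite SK !mulrA.
transitivity (\sum_(r <- Rm) \sum_(s <- Rm) r.2 * s.2 * Sinv s.1 * r.1).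
  apply: eq_bigr => r _.
  by rewrite (antipode_R (b := fun p q => r.2 * q * Sinv p * r.1)) //; linearity.
rewrite -(R_Delta1 (G := fun p q Z => Z * Sinv q * p)); last by linearity.
transitivity (\sum_(r <- Rm) \sum_(c <- Delta r.1) (fun z => r.2 * Sinv z) (S c.1 * c.2)).
  apply: eq_bigr => r _; apply: eq_bigr => c _ /=.
  by rewrite SinvM SK !mulrA.
rewrite -[RHS]eps_R1; apply: eq_bigr => r _.
by rewrite (antipodel hH (f := fun z => r.2 * Sinv z)) ?Sinv1 ?mulr1 //; linearity.
Qed.

Lemma antipode_R_conj_drinfeld : \sum_(s <- Rm) S s.2 * u * S s.1 = 1.
Proof.
rewrite -(antipode1 hH) -[RHS]mulr1.
rewrite -(R_mul_antipode1 (b := fun P Z => S Z * P)); last by linearity.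
rewrite exchange_big; apply: eq_bigr => s _.
rewrite /drinfeld mulr_sumlr; apply: eq_bigr => r _.
by rewrite (antipodeM hH) !mulrA.
Qed.

Lemma antipode2_drinfeld : S (S u) = u.
Proof.
rewrite /drinfeld !(lin_sum _ _ lS).
transitivity (\sum_(r <- Rm) (fun p q => S (S q) * S p) (S r.1) (S r.2)).
  by apply: eq_bigr => r _; rewrite !(antipodeM hH).
rewrite (antipode_R (b := fun p q => S (S q) * S p)) /=; last by linearity.
by rewrite -(antipode_R (b := fun p q => S q * p)) /=; last by linearity.
Qed.

Lemma drinfeld_mul x :
  u * x = \sum_(p <- Delta x) \sum_(c <- Delta p.1) S (S p.2) * S c.2 * u * c.1.
Proof.
rewrite (coassoc hH (G := fun a b c => S (S c) * S b * u * a)) /=; last by linearity.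
rewrite -[LHS](counitr hH (f := fun z => u * z) x); last by linearity.
apply: eq_bigr => p _.
transitivity (\sum_(c <- Delta p.2) (fun z => S z * u * p.1) (c.1 * S c.2)).
  by rewrite (antipoder hH (f := fun z => S z * u * p.1)) ?(antipode1 hH) ?mul1r //; linearity.
by apply: eq_bigr => c _; rewrite (antipodeM hH).
Qed.

Lemma drinfeld_R2 W (b : H -> H -> W) : bilinear_map b ->
  \sum_(r <- Rm) b r.1 (u * r.2) = \sum_(r <- Rm) b r.1 (S (S r.2) * u).
Proof.
move=> hb.
have eps_t a X : \sum_(t <- Rm) eps t.2 *: b (a * t.1) X = b a X.
  rewrite -{2}[a]mulr1 -eps_R2 mulr_sumr bilin_suml //.
  by apply: eq_bigr => t _; rewrite -scalerAr bilinZl.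
transitivity (\sum_(r <- Rm) \sum_(p <- Delta r.2) \sum_(c <- Delta p.1) \sum_(s <- Rm)
   b r.1 (S (S p.2) * S (s.2 * c.2) * s.1 * c.1)).
  apply: eq_bigr => r _; rewrite drinfeld_mul bilin_sumr //; apply: eq_bigr => p _.
  rewrite bilin_sumr //; apply: eq_bigr => c _.
  rewrite /drinfeld mulr_sumr mulr_suml bilin_sumr //; apply: eq_bigr => s _.
  by rewrite (antipodeM hH) !mulrA.
rewrite (R_Delta2 (G := fun P Q Z => \sum_(c <- Delta Q) \sum_(s <- Rm)
   b P (S (S Z) * S (s.2 * c.2) * s.1 * c.1))); last by linearity.
transitivity (\sum_(t <- Rm) \sum_(c <- Delta t.2) \sum_(s <- Rm) \sum_(r <- Rm)
   b (r.1 * t.1) (S (S r.2) * S (s.2 * c.2) * (s.1 * c.1))).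
  rewrite exchange_big; apply: eq_bigr => t _.
  rewrite exchange_big; apply: eq_bigr => c _.
  rewrite exchange_big; apply: eq_bigr => s _.
  by apply: eq_bigr => r _; rewrite !mulrA.
rewrite -(R_Delta2_op (G := fun P Q1 Q2 => \sum_(r <- Rm)
   b (r.1 * P) (S (S r.2) * S Q2 * Q1))); last by linearity.
transitivity (\sum_(t <- Rm) \sum_(r <- Rm) eps t.2 *: b (r.1 * t.1) (S (S r.2) * u)).
  apply: eq_bigr => t _.
  transitivity (\sum_(c <- Delta t.2) (fun z => \sum_(s <- Rm) \sum_(r <- Rm)
     b (r.1 * t.1) (S (S r.2) * S s.2 * z * s.1)) (S c.1 * c.2)).
    apply: eq_bigr => c _; apply: eq_bigr => s _; apply: eq_bigr => r _.
    by rewrite (antipodeM hH) !mulrA.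
  rewrite (antipodel hH (f := fun z => \sum_(s <- Rm) \sum_(r <- Rm)
     b (r.1 * t.1) (S (S r.2) * S s.2 * z * s.1))) /=; last by linearity.
  rewrite exchange_big scaler_sumr; apply: eq_bigr => r _.
  rewrite /drinfeld mulr_sumr bilin_sumr //; congr (_ *: _).
  by apply: eq_bigr => s _; rewrite mulr1 mulrA.
by rewrite exchange_big; apply: eq_bigr => r _; rewrite eps_t.
Qed.

(* Drinfeld's formula for [u^-1]; only the right inverse property is needed. *)
Definition drinfeld_inv := \sum_(r <- Rm) r.2 * S (S r.1).

Lemma drinfeld_mulV : u * drinfeld_inv = 1.
Proof.
rewrite /drinfeld_inv mulr_sumr.
transitivity (\sum_(r <- Rm) (u * r.2) * S (S r.1)).
  by apply: eq_bigr => r _; rewrite mulrA.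
rewrite (drinfeld_R2 (b := fun p q : H => q * S (S p))) /=; last by linearity.
transitivity (S (S (\sum_(r <- Rm) r.2 * u * r.1))).
  rewrite !(lin_sum _ _ lS); apply: eq_bigr => r _.
  by rewrite !(antipodeM hH) antipode2_drinfeld.
by rewrite R_conj_drinfeld !(antipode1 hH).
Qed.

Lemma nu_sum W (F : H * H -> W) h : \sum_(p <- nu Delta S Rm h) F p =
  \sum_(r <- Rm) \sum_(d <- Delta h) \sum_(c <- Delta d.1) \sum_(s <- Rm)
     F (r.2 * c.2 * s.2, S c.1 * S r.1 * d.2 * s.1).
Proof.
rewrite /nu big_flatten /= big_map; apply: eq_bigr => r _.
by rewrite big_allpairs_dep /Delta3 big_allpairs_dep.
Qed.

Lemma nu'_sum W (F : H * H -> W) h : \sum_(p <- nu' Delta S Rm h) F p =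
  \sum_(r <- Rm) \sum_(d <- Delta h) \sum_(c <- Delta d.1) \sum_(s <- Rm)
     F (r.1 * c.2 * s.1, S s.2 * S c.1 * r.2 * d.2).
Proof.
rewrite /nu' big_flatten /= big_map; apply: eq_bigr => r _.
by rewrite big_allpairs_dep /Delta3 big_allpairs_dep.
Qed.

Lemma nu_sum_central W (F F' : H * H -> W) h :
  bilinear_map (fun a b => F (a, b)) -> bilinear_map (fun a b => F' (a, b)) ->
  (forall a z, in_centre z -> F (a, z) = F' (a, z)) ->
  \sum_(p <- nu Delta S Rm h) F p = \sum_(p <- nu Delta S Rm h) F' p.
Proof.
move=> hF hF' hc; have [t [nu_t t_central]] := nu_central h.
rewrite (teq2_sum nu_t hF) (teq2_sum nu_t hF').
by apply: eq_big_seq => -[a z] /t_central; apply: hc.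
Qed.

Definition nuS x := \sum_(p <- nu Delta S Rm x) S p.1 * p.2.

Lemma nuS_opE x : \sum_(p <- nu Delta S Rm x) p.2 * S p.1 = nuS x.
Proof. by apply: nu_sum_central => [||a z /= ->] //; linearity. Qed.

Lemma linear_nuS : linear nuS.
Proof.
have nuSE x : nuS x = \sum_(r <- Rm) \sum_(d <- Delta x) \sum_(c <- Delta d.1)
    \sum_(s <- Rm) S (r.2 * c.2 * s.2) * (S c.1 * S r.1 * d.2 * s.1).
  by rewrite /nuS nu_sum.
have : linear (fun x => \sum_(r <- Rm) \sum_(d <- Delta x) \sum_(c <- Delta d.1)
    \sum_(s <- Rm) S (r.2 * c.2 * s.2) * (S c.1 * S r.1 * d.2 * s.1)) by linearity.
by move=> hl a x y; rewrite !nuSE hl.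
Qed.

Lemma Tmap_antipode_R y : Tmap Delta S Rm y =
  \sum_(e <- Delta y) \sum_(f <- Delta e.1) \sum_(r <- Rm) \sum_(s <- Rm)
     S r.1 * f.2 * s.1 * S s.2 * S f.1 * S r.2 * e.2.
Proof.
rewrite /Tmap /mu (teq2_sum (nu_nu' y) (G := fun p => p.1 * p.2)); last by linearity.
rewrite nu'_sum exchange_big; apply: eq_bigr => e _.
rewrite exchange_big; apply: eq_bigr => f _.
have hb : bilinear_map (fun P Q =>
    \sum_(s <- Rm) P * f.2 * s.1 * S s.2 * S f.1 * Q * e.2) by linearity.
transitivity (\sum_(r <- Rm) (fun P Q =>
    \sum_(s <- Rm) P * f.2 * s.1 * S s.2 * S f.1 * Q * e.2) r.1 r.2).
  by apply: eq_bigr => r _; apply: eq_bigr => s _; rewrite !mulrA.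
by rewrite -(antipode_R hb).
Qed.

Lemma Tmap_nuS y :
  Tmap Delta S Rm y = \sum_(d <- Delta y) \sum_(c <- Delta d.1) c.1 * nuS c.2 * d.2.
Proof.
have lnuS := linear_nuS.
symmetry; rewrite (coassoc hH (G := fun a b c => a * nuS b * c)) /=; last by linearity.
transitivity (\sum_(d <- Delta y) \sum_(c <- Delta d.2) \sum_(e <- Delta c.1)
   \sum_(f <- Delta e.1) \sum_(r <- Rm) \sum_(s <- Rm)
   d.1 * (S f.1 * S r.1 * e.2 * s.1 * S (r.2 * f.2 * s.2)) * c.2).
  apply: eq_bigr => d _; apply: eq_bigr => c _.
  rewrite -nuS_opE nu_sum mulr_sumlr.
  under eq_bigr => r _ do rewrite mulr_sumlr.
  rewrite exchange_big; apply: eq_bigr => e _.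
  under eq_bigr => r _ do rewrite mulr_sumlr.
  rewrite exchange_big; apply: eq_bigr => f _.
  by under eq_bigr => r _ do rewrite mulr_sumlr.
transitivity (\sum_(d <- Delta y) \sum_(c <- Delta d.2) \sum_(e <- Delta c.1)
   \sum_(f <- Delta e.2) \sum_(r <- Rm) \sum_(s <- Rm)
   d.1 * (S e.1 * S r.1 * f.2 * s.1 * S (r.2 * f.1 * s.2)) * c.2).
  apply: eq_bigr => d _; apply: eq_bigr => c _.
  by rewrite (coassoc hH (G := fun a b e2 => \sum_(r <- Rm) \sum_(s <- Rm)
     d.1 * (S a * S r.1 * e2 * s.1 * S (r.2 * b * s.2)) * c.2)) //; linearity.
pose b X Z := \sum_(e <- Delta Z) \sum_(f <- Delta e.1) \sum_(r <- Rm) \sum_(s <- Rm)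
   X * (S r.1 * f.2 * s.1 * S (r.2 * f.1 * s.2)) * e.2.
have hb : bilinear_map b by rewrite /b; linearity.
transitivity (\sum_(d <- Delta y) \sum_(c <- Delta d.2) b (d.1 * S c.1) c.2).
  apply: eq_bigr => d _.
  rewrite (coassoc hH (G := fun P Q Z => \sum_(f <- Delta Q) \sum_(r <- Rm) \sum_(s <- Rm)
     d.1 * (S P * S r.1 * f.2 * s.1 * S (r.2 * f.1 * s.2)) * Z)); last by linearity.
  apply: eq_bigr => c _; rewrite /b; apply: eq_bigr => e _; apply: eq_bigr => f _.
  by apply: eq_bigr => r _; apply: eq_bigr => s _; rewrite !mulrA.
rewrite (antipoder_coassoc hH _ hb) Tmap_antipode_R /b.
apply: eq_bigr => e _; apply: eq_bigr => f _; apply: eq_bigr => r _.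
by apply: eq_bigr => s _; rewrite mul1r !(antipodeM hH) !mulrA.
Qed.

Lemma nuS_drinfeld_counit y : \sum_(d <- Delta y) nuS d.2 * u * d.1 = eps y *: u.
Proof.
transitivity (\sum_(d <- Delta y) \sum_(p <- nu Delta S Rm d.2) S p.1 * u * d.1 * p.2).
  apply: eq_bigr => d _; rewrite /nuS !mulr_suml.
  apply: nu_sum_central => [||a z /= zc]; [linearity | linearity |].
  by rewrite -!mulrA; congr (_ * _); rewrite -zc mulrA.
pose b X Z := \sum_(e <- Delta Z) \sum_(r <- Rm) \sum_(s <- Rm)
  S (r.2 * e.1 * s.2) * u * X * (S r.1 * e.2 * s.1).
have hb : bilinear_map b by rewrite /b; linearity.
transitivity (\sum_(d <- Delta y) \sum_(c <- Delta d.2) b (d.1 * S c.1) c.2).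
  apply: eq_bigr => d _; rewrite nu_sum exchange_big.
  transitivity (\sum_(e <- Delta d.2) \sum_(c <- Delta e.1) \sum_(r <- Rm) \sum_(s <- Rm)
    S (r.2 * c.2 * s.2) * u * d.1 * (S c.1 * S r.1 * e.2 * s.1)).
    by apply: eq_bigr => e _; rewrite exchange_big.
  rewrite (coassoc hH (G := fun P Q Z => \sum_(r <- Rm) \sum_(s <- Rm)
    S (r.2 * Q * s.2) * u * d.1 * (S P * S r.1 * Z * s.1))); last by linearity.
  apply: eq_bigr => e _; rewrite /b; apply: eq_bigr => c _.
  by apply: eq_bigr => r _; apply: eq_bigr => s _; rewrite !mulrA.
rewrite (antipoder_coassoc hH _ hb) /b.
transitivity (\sum_(e <- Delta y) \sum_(s <- Rm) S s.2 * S e.1 * e.2 * s.1).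
  apply: eq_bigr => e _; rewrite exchange_big; apply: eq_bigr => s _.
  rewrite -[RHS]mulrA -[in RHS](mulr1 (S s.2 * S e.1)).
  rewrite -[in RHS]antipode_R_conj_drinfeld mulr_sumlr; apply: eq_bigr => r _.
  by rewrite mulr1 !(antipodeM hH) !mulrA.
rewrite exchange_big /drinfeld scaler_sumr; apply: eq_bigr => s _.
by rewrite (antipodel_mid hH).
Qed.

Lemma nuS_drinfeld x : nuS x * u = u * Sinv x.
Proof.
have lnuS := linear_nuS.
rewrite -(counitl hH (f := fun z => nuS z * u) x); last by linearity.
transitivity (\sum_(p <- Delta x) \sum_(c <- Delta p.1) nuS p.2 * u * c.2 * Sinv c.1).
  apply: eq_bigr => p _; rewrite -[_ *: _]mulr1 -scalerAl scalerAr -antipoder_Sinv.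
  by rewrite mulr_sumr; apply: eq_bigr => c _; rewrite !mulrA.
rewrite (coassoc hH (G := fun a b c => nuS c * u * b * Sinv a)) /=; last by linearity.
transitivity (\sum_(p <- Delta x) eps p.2 *: (u * Sinv p.1)).
  by apply: eq_bigr => p _; rewrite scalerAl -nuS_drinfeld_counit mulr_suml.
by rewrite (counitr hH (f := fun z => u * Sinv z)) //; linearity.
Qed.

Lemma Tmap_antipode_sandwich y :
  Tmap Delta S Rm (S y) = antipode_sandwich Delta S (fun x => nuS (S x)) y.
Proof.
have lnuS := linear_nuS.
rewrite Tmap_nuS (Delta_antipode hH
  (G := fun p => \sum_(c <- Delta p.1) c.1 * nuS c.2 * p.2)) /=; last by linearity.
apply: eq_bigr => d _.
by rewrite (Delta_antipode hH (G := fun p => p.1 * nuS p.2 * S d.1)) //; linearity.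
Qed.

Lemma antipode_Tmap_sandwich y :
  S (Tmap Delta S Rm y) = antipode_sandwich Delta S (fun x => S (nuS x)) y.
Proof.
have lnuS := linear_nuS.
rewrite Tmap_nuS (lin_sum _ _ lS).
transitivity (\sum_(d <- Delta y) \sum_(c <- Delta d.1) S d.2 * S (nuS c.2) * S c.1).
  apply: eq_bigr => d _; rewrite (lin_sum _ _ lS); apply: eq_bigr => c _.
  by rewrite !(antipodeM hH) mulrA.
by rewrite (coassoc hH (G := fun a b c => S c * S (nuS b) * S a)) //; linearity.
Qed.

Lemma Tmap_antipode_iff :
  (forall h, S (Tmap Delta S Rm h) = Tmap Delta S Rm (S h)) <->
  (forall x, nuS (S x) = S (nuS x)).
Proof.
have lnuS := linear_nuS.
split=> [e | e h].
  apply: (antipode_sandwich_inj hH (F1 := fun x => nuS (S x)) (F2 := fun x => S (nuS x)))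
    => [||y]; [linearity | linearity |].
  by rewrite -Tmap_antipode_sandwich -antipode_Tmap_sandwich e.
rewrite antipode_Tmap_sandwich Tmap_antipode_sandwich.
by apply: eq_bigr => d _; apply: eq_bigr => c _; rewrite e.
Qed.

Lemma drinfeld_sandwich_inj a b : S u * a * u = S u * b * u -> a = b.
Proof.
have Su_inv : S drinfeld_inv * S u = 1.
  by rewrite -(antipodeM hH) drinfeld_mulV (antipode1 hH).
move=> e; rewrite -[a]mul1r -[b]mul1r -Su_inv -[a]mulr1 -[b]mulr1 -drinfeld_mulV.
by rewrite !mulrA -!(mulrA (S drinfeld_inv)) e !mulrA.
Qed.

Lemma central_drinfeld_iff :
  in_centre (S u * u) <-> (forall x, nuS (S x) = S (nuS x)).
Proof.
have nuS_S x : nuS (S x) * u = u * x by rewrite nuS_drinfeld SK.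
have S_nuS x : S u * S (nuS x) = x * S u.
  by rewrite -(antipodeM hH) nuS_drinfeld (antipodeM hH) SinvK.
split=> [cu x | e x].
  by apply: drinfeld_sandwich_inj; rewrite -mulrA nuS_S mulrA -cu S_nuS mulrA.
by rewrite mulrA -[x * S u]S_nuS -e -mulrA nuS_S mulrA.
Qed.

Lemma mu_nu_tilde h :
  mu (nu_tilde Delta S Rm Sinv h) = S (Tmap Delta S Rm (Sinv h)).
Proof.
rewrite /nu_tilde /mu big_map /Tmap /mu (lin_sum _ _ lS).
apply: nu_sum_central => [||a z /= ->] //; [linearity | linearity |].
by rewrite (antipodeM hH).
Qed.

End Semiquasitriangular.

Unset Implicit Arguments.

Theorem proposition3p6 (k : fieldType) (H : algType k)
    (Delta : H -> seq (H * H)) (eps : H -> k) (S Sinv : H -> H)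
    (Rm : seq (H * H)) :
  is_hopf Delta eps S ->
  cancel S Sinv -> cancel Sinv S ->
  is_semiquasitriangular Delta S Rm ->
  [<-> in_centre (S (drinfeld S Rm) * drinfeld S Rm);
       forall h : H, S (Tmap Delta S Rm h) = Tmap Delta S Rm (S h);
       forall h : H, mu (nu Delta S Rm h) = mu (nu_tilde Delta S Rm Sinv h)].
Proof.
move=> hH SK SinvK hR.
have central_iff := central_drinfeld_iff hH SK SinvK hR.
have Tmap_iff := Tmap_antipode_iff hH SK SinvK hR.
have mu_tilde := mu_nu_tilde Sinv hH hR.
split; [|split].
- by move=> /central_iff /Tmap_iff.
- by move=> e h; rewrite mu_tilde e SinvK.
- move=> e; apply/central_iff/Tmap_iff => h.
  by rewrite [RHS]/Tmap e mu_tilde SK.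
Qed.
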